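(* Consider the $K$-class $N$-agent system and mean-field model described in the context, with constants $M_R,L_R,L_P,L_Q>0$ and discount factor $\gamma\in[0,1)$. Let $\mathbf{x}_0^{\mathbf{N}}$ be given (deterministic) initial states of all agents and $\boldsymbol{\mu}_0\in\mathcal{P}(\mathcal{X}\times[K])$ their empirical joint distribution. Define $S_R= M_R(1+L_Q)+L_R(2+L_Q)$, $S_P= (1+L_Q)+L_P(2+L_Q)$, $C_R= M_R+L_R$, $C_P= 2+L_P$. If $\gamma S_P<1$, then for every policy $\boldsymbol{\pi}\in\Pi$, $$\Big|v^{\mathbf{N}}(\mathbf{x}_0^{\mathbf{N}},\boldsymbol{\pi})-v^{\mathrm{MF}}(\boldsymbol{\mu}_0,\boldsymbol{\pi})\Big|\le \frac{C_R}{1-\gamma}\sqrt{|\mathcal{U}|}\,\frac{1}{N_{\mathrm{pop}}}\Big(\sum_{k\in[K]}\sqrt{N_k}\Big)+C_P\Big(\frac{S_R}{S_P-1}\Big)\sqrt{|\mathcal{X}||\mathcal{U}|}\,\frac{1}{N_{\mathrm{pop}}}\Big(\sum_{k\in[K]}\sqrt{N_k}\Big)\Big[\frac{1}{1-\gamma S_P}-\frac{1}{1-\gamma}\Big].$$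
   Context: Fix integers $K\ge1$, $N_1,\dots,N_K\ge1$, write $[K]=\{1,\dots,K\}$, $N_{\mathrm{pop}}=\sum_{k}N_k$, $\mathbf{N}=(N_k)_k$, and let $\mathcal{X},\mathcal{U}$ be finite state and action sets. For a finite set $A$, $\mathcal{P}(A)$ is the set of probability distributions on $A$, and $|\cdot|_1$ is the $L_1$ norm. Agent $j\in[N_k]$ of class $k$ has state $x_{j,k}^{t}\in\mathcal{X}$ and action $u_{j,k}^{t}\in\mathcal{U}$ at time $t\in\{0,1,\dots\}$; $\mathbf{x}_t^{\mathbf{N}},\mathbf{u}_t^{\mathbf{N}}$ denote all states/actions at time $t$. Empirical joint distributions: $\boldsymbol{\mu}_t^{\mathbf{N}}(x,k)=\frac{1}{N_{\mathrm{pop}}}\sum_{j=1}^{N_k}\mathbf 1(x_{j,k}^t=x)$, $\boldsymbol{\nu}_t^{\mathbf{N}}(u,k)=\frac{1}{N_{\mathrm{pop}}}\sum_{j=1}^{N_k}\mathbf 1(u_{j,k}^t=u)$, elements of $\mathcal{P}(\mathcal{X}\times[K])$ and $\mathcal{P}(\mathcal{U}\times[K])$. For each $k$ there are a reward function $r_k:\mathcal{X}\times\mathcal{U}\times\mathcal{P}(\mathcal{X}\times[K])\times\mathcal{P}(\mathcal{U}\times[K])\to\mathbb{R}$ and a transition law $P_k:\mathcal{X}\times\mathcal{U}\times\mathcal{P}(\mathcal{X}\times[K])\times\mathcal{P}(\mathcal{U}\times[K])\to\mathcal{P}(\mathcal{X})$ such that for all $x,u,k,\boldsymbol\mu_1,\boldsymbol\mu_2,\boldsymbol\nu_1,\boldsymbol\nu_2$: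 $|r_k(x,u,\boldsymbol\mu_1,\boldsymbol\nu_1)|\le M_R$, $|r_k(x,u,\boldsymbol\mu_1,\boldsymbol\nu_1)-r_k(x,u,\boldsymbol\mu_2,\boldsymbol\nu_2)|\le L_R(|\boldsymbol\mu_1-\boldsymbol\mu_2|_1+|\boldsymbol\nu_1-\boldsymbol\nu_2|_1)$, $|P_k(x,u,\boldsymbol\mu_1,\boldsymbol\nu_1)-P_k(x,u,\boldsymbol\mu_2,\boldsymbol\nu_2)|_1\le L_P(|\boldsymbol\mu_1-\boldsymbol\mu_2|_1+|\boldsymbol\nu_1-\boldsymbol\nu_2|_1)$. A policy is $\boldsymbol\pi=\{\boldsymbol\pi_t\}_{t\ge0}$, $\boldsymbol\pi_t=(\pi_k^t)_{k\in[K]}$, with decision rules $\pi_k^t:\mathcal{X}\times\mathcal{P}(\mathcal{X}\times[K])\to\mathcal{P}(\mathcal{U})$. $\Pi$ is the set of policies with $|\pi_k^t(x,\boldsymbol\mu_1)-\pi_k^t(x,\boldsymbol\mu_2)|_1\le L_Q|\boldsymbol\mu_1-\boldsymbol\mu_2|_1$ for all $t,k,x,\boldsymbol\mu_1,\boldsymbol\mu_2$. Dynamics of the $\mathbf N$-agent system under $\boldsymbol\pi$: conditioned on $\mathbf{x}_t^{\mathbf{N}}$, actions are drawn independently across agents with $u_{j,k}^t\sim\pi_k^t(x_{j,k}^t,\boldsymbol\mu_t^{\mathbf N})$; conditioned on $\mathbf{x}_t^{\mathbf{N}},\mathbf{u}_t^{\mathbf{N}}$, next states are drawn independently across agents with $x_{j,k}^{t+1}\sim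 P_k(x_{j,k}^t,u_{j,k}^t,\boldsymbol\mu_t^{\mathbf N},\boldsymbol\nu_t^{\mathbf N})$. Empirical value: $v^{\mathbf N}(\mathbf x_0^{\mathbf N},\boldsymbol\pi)=\frac{1}{N_{\mathrm{pop}}}\sum_k\sum_{j=1}^{N_k}\mathbb E\big[\sum_{t\ge0}\gamma^t r_k(x_{j,k}^t,u_{j,k}^t,\boldsymbol\mu_t^{\mathbf N},\boldsymbol\nu_t^{\mathbf N})\big]$. Mean-field operators for $\boldsymbol\mu\in\mathcal P(\mathcal X\times[K])$ and a collection $\boldsymbol\pi=(\pi_k)_k$ of decision rules: $\nu^{\mathrm{MF}}(\boldsymbol\mu,\boldsymbol\pi)(u,k)=\sum_x\pi_k(x,\boldsymbol\mu)(u)\boldsymbol\mu(x,k)$; $P^{\mathrm{MF}}(\boldsymbol\mu,\boldsymbol\pi)(x',k)=\sum_{x,u}\boldsymbol\mu(x,k)\pi_k(x,\boldsymbol\mu)(u)P_k(x,u,\boldsymbol\mu,\nu^{\mathrm{MF}}(\boldsymbol\mu,\boldsymbol\pi))(x')$; $r_k^{\mathrm{MF}}(\boldsymbol\mu,\boldsymbol\pi)=\sum_{x,u}\boldsymbol\mu(x,k)\pi_k(x,\boldsymbol\mu)(u)r_k(x,u,\boldsymbol\mu,\nu^{\mathrm{MF}}(\boldsymbol\mu,\boldsymbol\pi))$. Mean-field value: with $\boldsymbol\mu_{t+1}=P^{\mathrm{MF}}(\boldsymbol\mu_t,\boldsymbol\pi_t)$, $v^{\mathrm{MF}}(\boldsymbol\mu_0,\boldsymbol\pi)=\sum_k\sum_{t\ge0}\gamma^t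 r_k^{\mathrm{MF}}(\boldsymbol\mu_t,\boldsymbol\pi_t)$. *)

From HB Require Import structures.
From mathcomp Require Import all_boot all_order all_algebra.
From mathcomp Require Import all_classical all_reals all_analysis.
Set Implicit Arguments. Unset Strict Implicit. Unset Printing Implicit Defensive.
Import Order.TTheory GRing.Theory Num.Theory numFieldNormedType.Exports.
Local Open Scope ring_scope.

Section MF.
Variables (R : realType) (X U : finType) (K : nat) (N : 'I_K -> nat).

Definition agent := {k : 'I_K & 'I_(N k)}.
Definition Npop : nat := (\sum_(k < K) N k)%N.

Definition jdistX := {ffun X * 'I_K -> R}.
Definition jdistU := {ffun U * 'I_K -> R}.

Definition is_distr (A : finType) (p : {ffun A -> R}) : Prop :=
  (forall a, 0 <= p a) /\ \sum_a p a = 1.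

Definition l1 (A : finType) (p q : {ffun A -> R}) : R := \sum_a `|p a - q a|.

Definition reward_t := 'I_K -> X -> U -> jdistX -> jdistU -> R.
Definition trans_t := 'I_K -> X -> U -> jdistX -> jdistU -> {ffun X -> R}.
Definition policy_t := nat -> 'I_K -> X -> jdistX -> {ffun U -> R}.

Definition emp_mu (xs : {ffun agent -> X}) : jdistX :=
  [ffun p : X * 'I_K => (\sum_(a : agent | tag a == p.2) (xs a == p.1)%:R) / Npop%:R].
Definition emp_nu (us : {ffun agent -> U}) : jdistU :=
  [ffun p : U * 'I_K => (\sum_(a : agent | tag a == p.2) (us a == p.1)%:R) / Npop%:R].

Variables (r : reward_t) (P : trans_t) (pi : policy_t).

Definition act_prob (t : nat) (xs : {ffun agent -> X}) (us : {ffun agent -> U}) : R :=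
  \prod_(a : agent) pi t (tag a) (xs a) (emp_mu xs) (us a).

Definition step_prob (xs : {ffun agent -> X}) (us : {ffun agent -> U})
  (xs' : {ffun agent -> X}) : R :=
  \prod_(a : agent) P (tag a) (xs a) (us a) (emp_mu xs) (emp_nu us) (xs' a).

Fixpoint state_law (x0 : {ffun agent -> X}) (t : nat) : {ffun {ffun agent -> X} -> R} :=
  match t with
  | 0 => [ffun xs => (xs == x0)%:R]
  | t'.+1 => [ffun xs' => \sum_xs \sum_us
               state_law x0 t' xs * act_prob t' xs us * step_prob xs us xs']
  end.

Definition exp_reward (x0 : {ffun agent -> X}) (t : nat) : R :=
  \sum_xs \sum_us state_law x0 t xs * act_prob t xs us *
     ((\sum_(a : agent) r (tag a) (xs a) (us a) (emp_mu xs) (emp_nu us)) / Npop%:R).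

Definition vN (gamma : R) (x0 : {ffun agent -> X}) : R :=
  limn (series (fun t => gamma ^+ t * exp_reward x0 t)).

Definition nuMF (mu : jdistX) (pit : 'I_K -> X -> jdistX -> {ffun U -> R}) : jdistU :=
  [ffun p : U * 'I_K => \sum_x pit p.2 x mu p.1 * mu (x, p.2)].
Definition PMF (mu : jdistX) (pit : 'I_K -> X -> jdistX -> {ffun U -> R}) : jdistX :=
  [ffun p : X * 'I_K => \sum_x \sum_u
     mu (x, p.2) * pit p.2 x mu u * P p.2 x u mu (nuMF mu pit) p.1].
Definition rMF (k : 'I_K) (mu : jdistX) (pit : 'I_K -> X -> jdistX -> {ffun U -> R}) : R :=
  \sum_x \sum_u mu (x, k) * pit k x mu u * r k x u mu (nuMF mu pit).

Fixpoint mu_traj (mu0 : jdistX) (t : nat) : jdistX :=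
  match t with 0 => mu0 | t'.+1 => PMF (mu_traj mu0 t') (pi t') end.

Definition vMF (gamma : R) (mu0 : jdistX) : R :=
  \sum_(k < K) limn (series (fun t => gamma ^+ t * rMF k (mu_traj mu0 t) (pi t))).

End MF.

(* The N-agent and mean-field values are compared time step by time step through
   D_t, the expected L1 distance between the empirical state law of the agents and
   the mean-field flow mu_t.  Given the current states (resp. states and actions) the
   agents act (resp. move) independently, so an L1 Chebyshev bound shows that the
   empirical action and next-state laws are within O(sqrt|U| e) and O(sqrt|X| e) of
   their conditional means in expectation, where e = (sum_k sqrt N_k) / N_pop.  The
   mean-field operators are Lipschitz in the state law, with constant S_P for the
   transition and S_R for the reward; hence D_(t+1) <= S_P D_t + c, so that
   D_t <= c (S_P^t - 1) / (S_P - 1), and the reward gap at time t is at most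
   L_R sqrt|U| e + S_R D_t.  Summing against gamma^t, which converges because
   gamma S_P < 1, gives the bound. *)

From HB Require Import structures.
From mathcomp Require Import all_boot all_order all_algebra.
From mathcomp Require Import all_classical all_reals all_analysis.
From mathcomp Require Import ring lra.
Set Implicit Arguments. Unset Strict Implicit. Unset Printing Implicit Defensive.
Import Order.TTheory GRing.Theory Num.Theory numFieldNormedType.Exports.
Local Open Scope ring_scope.

Section FiniteProbability.
Variable R : realType.

Lemma sqr_wsum_le (T : finType) (w s : T -> R) : (forall t, 0 <= w t) ->
  (\sum_t w t * s t) ^+ 2 <= (\sum_t w t) * (\sum_t w t * s t ^+ 2).
Proof.
move=> w_ge0.
have sum_ge0 : 0 <= \sum_i \sum_j w i * w j * (s i - s j) ^+ 2.
  by apply: sumr_ge0 => i _; apply: sumr_ge0 => j _; rewrite mulr_ge0 ?sqr_ge0 ?mulr_ge0.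
have lagrange : \sum_i \sum_j w i * w j * (s i - s j) ^+ 2 =
   2%:R * ((\sum_t w t) * (\sum_t w t * s t ^+ 2) - (\sum_t w t * s t) ^+ 2).
  have expand i j : w i * w j * (s i - s j) ^+ 2 =
      w j * (w i * s i ^+ 2) + w i * (w j * s j ^+ 2) - 2%:R * ((w i * s i) * (w j * s j)).
    by ring.
  under eq_bigr => i _ do under eq_bigr => j _ do rewrite expand.
  under eq_bigr => i _ do rewrite sumrB big_split /= -!mulr_suml -mulr_sumr -mulr_sumr.
  by rewrite sumrB big_split /= -!mulr_suml -!mulr_sumr expr2 -big_distrlr /=; ring.
by move: sum_ge0; rewrite lagrange pmulr_rge0 ?subr_ge0 ?ltr0n.
Qed.

Lemma sum_sqrt_le (T : finType) (c : T -> R) : (forall t, 0 <= c t) ->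
  \sum_t Num.sqrt (c t) <= Num.sqrt (#|T|%:R * \sum_t c t).
Proof.
move=> c_ge0; have := sqr_wsum_le (fun t => Num.sqrt (c t)) (fun _ => ler01).
have sum_sqr : \sum_t 1 * Num.sqrt (c t) ^+ 2 = \sum_t c t.
  by apply: eq_bigr => t _; rewrite mul1r sqr_sqrtr.
have sum_sqrt : \sum_t 1 * Num.sqrt (c t) = \sum_t Num.sqrt (c t).
  by apply: eq_bigr => t _; rewrite mul1r.
rewrite sum_sqr sum_sqrt sumr_const -mulr_natl mulr1 => le_sqr.
rewrite -(ger0_norm (sumr_ge0 _ (fun t _ => sqrtr_ge0 (c t)))) -sqrtr_sqr.
by rewrite ler_sqrt // mulr_ge0 ?sumr_ge0.
Qed.

Lemma sum_pair (A B : finType) (g : A * B -> R) : \sum_p g p = \sum_b \sum_a g (a, b).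
Proof.
by rewrite [RHS]exchange_big pair_big; apply: eq_bigr => -[].
Qed.

Definition is_pmf (T : finType) (w : T -> R) := (forall t, 0 <= w t) /\ \sum_t w t = 1.

Lemma pmf_card_gt0 (T : finType) (w : T -> R) : is_pmf w -> (0 < #|T|)%N.
Proof.
case=> _; rewrite lt0n; apply: contra_eqN => /eqP/card0_eq T0.
by rewrite big_pred0 // eq_sym oner_eq0.
Qed.

Lemma pmf_le1 (T : finType) (w : T -> R) : is_pmf w -> forall t, w t <= 1.
Proof. by case=> w_ge0 w_sum1 t; rewrite -w_sum1 (bigD1 t) //= lerDl sumr_ge0. Qed.

Lemma pmf_sum_const (T : finType) (w : T -> R) c : is_pmf w -> \sum_t w t * c = c.
Proof. by case=> _ w_sum1; rewrite -mulr_suml w_sum1 mul1r. Qed.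

Lemma pmf_mean_norm_le (T : finType) (w f : T -> R) B : is_pmf w ->
  (forall t, `|f t| <= B) -> `|\sum_t w t * f t| <= B.
Proof.
move=> w_pmf f_le; have [w_ge0 _] := w_pmf; apply: le_trans (ler_norm_sum _ _ _) _.
rewrite -[leRHS](pmf_sum_const B w_pmf); apply: ler_sum => t _.
by rewrite normrM ger0_norm // ler_wpM2l.
Qed.

Lemma pmf_sum_affine (T : finType) (w f : T -> R) (a b : R) : is_pmf w ->
  \sum_t w t * (a + b * f t) = a + b * \sum_t w t * f t.
Proof.
case=> _ w_sum1; rewrite -[a in RHS]mulr1 -w_sum1 !mulr_sumr -big_split /=.
by apply: eq_bigr => t _; ring.
Qed.

Lemma pmf_sum_sqr_le1 (T : finType) (w : T -> R) : is_pmf w -> \sum_t w t ^+ 2 <= 1.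
Proof.
move=> w_pmf; have [w_ge0 w_sum1] := w_pmf.
by rewrite -[leRHS]w_sum1 ler_sum // => t _; rewrite expr2 ler_piMr ?pmf_le1.
Qed.

Lemma pmf_mean_abs_le (T : finType) (w s : T -> R) : is_pmf w ->
  \sum_t w t * `|s t| <= Num.sqrt (\sum_t w t * s t ^+ 2).
Proof.
case=> w_ge0 w_sum1; have := sqr_wsum_le (fun t => `|s t|) w_ge0.
rewrite w_sum1 mul1r; under [in X in _ <= X -> _]eq_bigr do rewrite real_normK ?num_real //.
have mean_ge0 : 0 <= \sum_t w t * `|s t| by rewrite sumr_ge0 // => t _; rewrite mulr_ge0.
move=> le_sqr; rewrite -(ger0_norm mean_ge0) -sqrtr_sqr ler_sqrt //.
by rewrite sumr_ge0 // => t _; rewrite mulr_ge0 ?sqr_ge0.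
Qed.

Lemma pmf_var_le (T : finType) (w f : T -> R) : is_pmf w ->
  \sum_t w t * (f t - \sum_s w s * f s) ^+ 2 <= \sum_t w t * f t ^+ 2.
Proof.
case=> _ w_sum1; set m := \sum_s w s * f s.
have -> : \sum_t w t * (f t - m) ^+ 2 =
    \sum_t (w t * f t ^+ 2 - 2%:R * m * (w t * f t) + m ^+ 2 * w t).
  by apply: eq_bigr => t _; ring.
rewrite big_split sumrB /= -!mulr_sumr w_sum1 -/m; nra.
Qed.

Lemma pmf_centered_mean (T : finType) (w f : T -> R) : is_pmf w ->
  \sum_t w t * (f t - \sum_s w s * f s) = 0.
Proof.
by case=> _ w_sum1; under eq_bigr do rewrite mulrBr; rewrite sumrB -mulr_suml w_sum1 mul1r subrr.
Qed.

Section ProductPmf.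
Variables (I Y : finType) (q : I -> Y -> R).
Hypothesis q_pmf : forall i, is_pmf (q i).

Definition prod_pmf (ys : {ffun I -> Y}) : R := \prod_i q i (ys i).

Lemma prod_pmf_ge0 ys : 0 <= prod_pmf ys.
Proof. by apply: prodr_ge0 => i _; case: (q_pmf i). Qed.

Lemma prod_pmf_factor (g : I -> Y -> R) :
  \sum_ys prod_pmf ys * \prod_i g i (ys i) = \prod_i \sum_y q i y * g i y.
Proof.
by rewrite bigA_distr_bigA; apply: eq_bigr => ys _; rewrite big_split.
Qed.

Lemma prod_pmf_sum1 : \sum_ys prod_pmf ys = 1.
Proof.
have prod1 : \prod_i \sum_y q i y * 1 = 1.
  by apply: big1 => i _; under eq_bigr do rewrite mulr1; case: (q_pmf i).
by rewrite -prod1 -prod_pmf_factor; apply: eq_bigr => ys _; rewrite big1 ?mulr1.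
Qed.

Lemma prod_pmf_marginal a (g : Y -> R) :
  \sum_ys prod_pmf ys * g (ys a) = \sum_y q a y * g y.
Proof.
pose G i y := if i == a then g y else 1.
have G_prod ys : \prod_i G i (ys i) = g (ys a).
  by rewrite (bigD1 a) //= /G eqxx big1 ?mulr1 // => i /negPf ->.
have G_sum i : i != a -> \sum_y q i y * G i y = 1.
  by move=> /negPf ia; under eq_bigr do rewrite /G ia mulr1; case: (q_pmf i).
under eq_bigr do rewrite -G_prod.
rewrite prod_pmf_factor (bigD1 a) //= [X in _ * X]big1 ?mulr1 => [|i]; last exact: G_sum.
by apply: eq_bigr => y _; rewrite /G eqxx.
Qed.

Lemma prod_pmf_marginal2 a b (g h : Y -> R) : a != b ->
  \sum_ys prod_pmf ys * (g (ys a) * h (ys b)) = (\sum_y q a y * g y) * (\sum_y q b y * h y).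
Proof.
move=> /negPf ab; pose G i y := if i == a then g y else if i == b then h y else 1.
have G_prod ys : \prod_i G i (ys i) = g (ys a) * h (ys b).
  rewrite (bigD1 a) //= (bigD1 b) /=; last by rewrite eq_sym ab.
  by rewrite /G eqxx eq_sym ab eqxx big1 ?mulr1 // => i /andP[/negPf -> /negPf ->].
have G_sum i : i != b -> i != a -> \sum_y q i y * G i y = 1.
  by move=> /negPf ib /negPf ia; under eq_bigr do rewrite /G ia ib mulr1; case: (q_pmf i).
under eq_bigr do rewrite -G_prod.
rewrite prod_pmf_factor (bigD1 a) //= (bigD1 b) /=; last by rewrite eq_sym ab.
rewrite [X in _ * (_ * X)]big1 ?mulr1 => [|i /andP[ib ia]]; last exact: G_sum.
congr (_ * _); apply: eq_bigr => y _; rewrite /G eqxx //.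
by rewrite eq_sym ab.
Qed.

Lemma prod_pmf_var_sum (f : I -> Y -> R) :
  let c i y := f i y - \sum_z q i z * f i z in
  \sum_ys prod_pmf ys * (\sum_i c i (ys i)) ^+ 2 = \sum_i \sum_y q i y * c i y ^+ 2.
Proof.
move=> c; have sqr_sum ys : (\sum_i c i (ys i)) ^+ 2 = \sum_i \sum_j c i (ys i) * c j (ys j).
  by rewrite expr2 mulr_suml; under eq_bigr do rewrite mulr_sumr.
under eq_bigr do rewrite sqr_sum mulr_sumr; rewrite exchange_big /=; apply: eq_bigr => i _.
under eq_bigr do rewrite mulr_sumr; rewrite exchange_big /= (bigD1 i) //= [X in _ + X]big1 ?addr0.
  by under eq_bigr do rewrite -expr2; rewrite (prod_pmf_marginal i (fun y => c i y ^+ 2)).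
by move=> j ji; rewrite prod_pmf_marginal2 1?eq_sym // pmf_centered_mean ?mul0r.
Qed.

(* Jensen's inequality, then additivity of the variance over independent coordinates *)
Lemma prod_pmf_abs_centered_sum_le (f : I -> Y -> R) :
  \sum_ys prod_pmf ys * `|\sum_i (f i (ys i) - \sum_y q i y * f i y)|
  <= Num.sqrt (\sum_i \sum_y q i y * f i y ^+ 2).
Proof.
have ys_pmf : is_pmf prod_pmf by split; [exact: prod_pmf_ge0 | exact: prod_pmf_sum1].
apply: le_trans (pmf_mean_abs_le _ ys_pmf) _.
have moments_ge0 : 0 <= \sum_i \sum_y q i y * f i y ^+ 2.
  by apply: sumr_ge0 => i _; apply: sumr_ge0 => y _; rewrite mulr_ge0 ?sqr_ge0 //; case: (q_pmf i).
by rewrite prod_pmf_var_sum ler_sqrt //; apply: ler_sum => i _; exact: pmf_var_le.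
Qed.

End ProductPmf.
End FiniteProbability.

Section Agents.
Variables (R : realType) (K : nat) (N : 'I_K -> nat).
Local Notation agent := (agent N).
Local Notation Np := ((Npop N)%:R : R).

Lemma sum_by_class (G : agent -> R) : \sum_a G a = \sum_(k < K) \sum_(a | tag a == k) G a.
Proof. exact: (partition_big tag predT). Qed.

Lemma card_class k : \sum_(a : agent | tag a == k) (1 : R) = (N k)%:R.
Proof.
have := @sig_big_dep R 0 +%R 'I_K (fun i => 'I_(N i)) (pred1 k) (fun _ _ => true)
  (fun _ _ => 1).
rewrite big_pred1_eq sumr_const card_ord => ->.
by apply: eq_bigl => -[i j]; rewrite /= andbT.
Qed.

Lemma card_agent : \sum_(a : agent) (1 : R) = Np.
Proof. by rewrite sum_by_class natr_sum; apply: eq_bigr => k _; exact: card_class. Qed.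

(* [emp_mu] and [emp_nu] are instances of [empirical], by conversion. *)
Definition empirical (Y : finType) (ys : {ffun agent -> Y}) : {ffun Y * 'I_K -> R} :=
  [ffun p : Y * 'I_K => (\sum_(a : agent | tag a == p.2) (ys a == p.1)%:R) / Np].

Lemma empirical_sum (Y : finType) (ys : {ffun agent -> Y}) k (g : Y -> R) :
  \sum_y empirical ys (y, k) * g y = (\sum_(a : agent | tag a == k) g (ys a)) / Np.
Proof.
under eq_bigr => y _ do rewrite ffunE /= mulrAC mulr_suml.
rewrite -mulr_suml exchange_big /=; congr (_ * _); apply: eq_bigr => a _.
rewrite (bigD1 (ys a)) //= eqxx mul1r big1 ?addr0 // => y /negPf.
by rewrite eq_sym => ->; rewrite mul0r.
Qed.

Lemma empirical_distr (Y : finType) (ys : {ffun agent -> Y}) :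
  (0 < Npop N)%N -> is_distr (empirical ys).
Proof.
move=> Npop_gt0; split => [p|]; first by rewrite ffunE divr_ge0 // sumr_ge0.
rewrite sum_pair; under eq_bigr => k _ do rewrite -(eq_bigr _ (fun y _ => mulr1 _)) empirical_sum.
under eq_bigr => k _ do rewrite card_class.
by rewrite -mulr_suml -natr_sum divff // pnatr_eq0 -lt0n.
Qed.

Definition conc_rate : R := Np^-1 * \sum_(k < K) Num.sqrt (N k)%:R.

Lemma conc_rate_ge0 : 0 <= conc_rate.
Proof. by rewrite mulr_ge0 ?invr_ge0 ?sumr_ge0 // => k _; rewrite sqrtr_ge0. Qed.

Section EmpiricalConcentration.
Variables (Y Z : finType) (q : agent -> Y -> R) (h : agent -> Y -> Z -> R).
Hypotheses (q_pmf : forall a, is_pmf (q a)) (h_pmf : forall a y, is_pmf (h a y)).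

Lemma class_moment_ge0 k z : 0 <= \sum_(a | tag a == k) \sum_y q a y * h a y z ^+ 2.
Proof.
apply: sumr_ge0 => a _; apply: sumr_ge0 => y _.
by rewrite mulr_ge0 ?sqr_ge0 //; case: (q_pmf a).
Qed.

Lemma class_centered_le k z :
  \sum_ys prod_pmf q ys * `|\sum_(a | tag a == k) (h a (ys a) z - \sum_y q a y * h a y z)|
  <= Num.sqrt (\sum_(a | tag a == k) \sum_y q a y * h a y z ^+ 2).
Proof.
pose f a y := (tag a == k)%:R * h a y z.
have restrict ys : \sum_(a | tag a == k) (h a (ys a) z - \sum_y q a y * h a y z)
    = \sum_a (f a (ys a) - \sum_y q a y * f a y).
  rewrite big_mkcond /=; apply: eq_bigr => a _; rewrite /f.
  case: (tag a == k).
    by under [in RHS]eq_bigr do rewrite mul1r; rewrite mul1r.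
  by under [in RHS]eq_bigr do rewrite mul0r mulr0; rewrite big1 // mul0r subrr.
under eq_bigr do rewrite restrict.
apply: le_trans (prod_pmf_abs_centered_sum_le q_pmf f) _.
rewrite ler_sqrt ?class_moment_ge0 // [leRHS]big_mkcond /=.
apply: ler_sum => a _; rewrite /f; case: (tag a == k).
  by apply: ler_sum => y _; rewrite mul1r.
by rewrite big1 // => y _; rewrite mul0r expr2 mul0r mulr0.
Qed.

Lemma class_moment_le k :
  \sum_z \sum_(a | tag a == k) \sum_y q a y * h a y z ^+ 2 <= (N k)%:R.
Proof.
rewrite exchange_big /= -card_class; apply: ler_sum => a _.
rewrite exchange_big /=; under eq_bigr do rewrite -mulr_sumr.
have [q_ge0 q_sum1] := q_pmf a; rewrite -[leRHS]q_sum1; apply: ler_sum => y _.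
by rewrite ler_piMr // pmf_sum_sqr_le1.
Qed.

Lemma empirical_kernel_conc (M : {ffun agent -> Y} -> {ffun Z * 'I_K -> R})
    (m : {ffun Z * 'I_K -> R}) :
  (forall ys z k, M ys (z, k) = (\sum_(a | tag a == k) h a (ys a) z) / Np) ->
  (forall z k, m (z, k) = (\sum_(a | tag a == k) \sum_y q a y * h a y z) / Np) ->
  \sum_ys prod_pmf q ys * l1 (M ys) m <= Num.sqrt #|Z|%:R * conc_rate.
Proof.
move=> ME mE; pose c k z := \sum_(a | tag a == k) \sum_y q a y * h a y z ^+ 2.
have c_ge0 k z : 0 <= c k z := class_moment_ge0 k z.
apply: le_trans (_ : \sum_(p : Z * 'I_K) Num.sqrt (c p.2 p.1) * Np^-1 <= _).
  under eq_bigr do rewrite mulr_sumr; rewrite exchange_big /=; apply: ler_sum => -[z k] _ /=.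
  under eq_bigr do rewrite ME mE -mulrBl -sumrB normrM mulrA.
  rewrite -mulr_suml ger0_norm ?invr_ge0 //.
  by rewrite ler_wpM2r ?invr_ge0 // class_centered_le.
rewrite -mulr_suml sum_pair mulrC /conc_rate mulrCA ler_wpM2l ?invr_ge0 // mulr_sumr.
apply: ler_sum => k _; apply: le_trans (sum_sqrt_le (c_ge0 k)) _.
by rewrite -sqrtrM // ler_sqrt ?mulr_ge0 ?ler_wpM2l ?class_moment_le.
Qed.

End EmpiricalConcentration.
End Agents.

Section Mixture.
Variables (R : realType) (X U W : finType) (K : nat).
Variables (mu1 mu2 : X * 'I_K -> R) (p1 p2 : 'I_K -> X -> U -> R)
  (G1 G2 : 'I_K -> X -> U -> W -> R) (B D Lq : R).
Hypotheses (mu2_ge0 : forall z, 0 <= mu2 z) (mu2_sum1 : \sum_z mu2 z = 1).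
Hypotheses (p1_ge0 : forall k x u, 0 <= p1 k x u) (p1_sum1 : forall k x, \sum_u p1 k x u = 1).
Hypotheses (p2_ge0 : forall k x u, 0 <= p2 k x u) (p2_sum1 : forall k x, \sum_u p2 k x u = 1).
Hypotheses (G1_le : forall k x u, \sum_w `|G1 k x u w| <= B)
  (G12_le : forall k x u, \sum_w `|G1 k x u w - G2 k x u w| <= D)
  (p12_le : forall k x, \sum_u `|p1 k x u - p2 k x u| <= Lq) (B_ge0 : 0 <= B).

Lemma mixture_term_le k x u :
  \sum_w `|mu1 (x, k) * p1 k x u * G1 k x u w - mu2 (x, k) * p2 k x u * G2 k x u w|
  <= `|mu1 (x, k) - mu2 (x, k)| * p1 k x u * B
     + mu2 (x, k) * `|p1 k x u - p2 k x u| * B + mu2 (x, k) * p2 k x u * D.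
Proof.
set m1 := mu1 (x, k); set m2 := mu2 (x, k); set a1 := p1 k x u; set a2 := p2 k x u.
have m2_ge0 : 0 <= m2 := mu2_ge0 _.
have a1_ge0 : 0 <= a1 := p1_ge0 _ _ _.
have a2_ge0 : 0 <= a2 := p2_ge0 _ _ _.
apply: le_trans (_ : \sum_w (`|m1 - m2| * a1 * `|G1 k x u w| + m2 * `|a1 - a2| * `|G1 k x u w|
    + m2 * a2 * `|G1 k x u w - G2 k x u w|) <= _).
  apply: ler_sum => w _.
  have -> : m1 * a1 * G1 k x u w - m2 * a2 * G2 k x u w = (m1 - m2) * a1 * G1 k x u w
      + m2 * (a1 - a2) * G1 k x u w + m2 * a2 * (G1 k x u w - G2 k x u w) by ring.
  apply: le_trans (ler_normD _ _) _; rewrite !normrM (ger0_norm m2_ge0) (ger0_norm a2_ge0) lerD2r.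
  by apply: le_trans (ler_normD _ _) _; rewrite !normrM (ger0_norm m2_ge0) (ger0_norm a1_ge0).
by rewrite !big_split /= -!mulr_sumr !lerD ?ler_wpM2l ?mulr_ge0.
Qed.

Lemma mixture_l1_le :
  \sum_k \sum_w `|\sum_x \sum_u (mu1 (x, k) * p1 k x u * G1 k x u w
                                - mu2 (x, k) * p2 k x u * G2 k x u w)|
  <= B * (\sum_k \sum_x `|mu1 (x, k) - mu2 (x, k)|) + B * Lq + D.
Proof.
have point_le k x : \sum_u (`|mu1 (x, k) - mu2 (x, k)| * p1 k x u * B
     + mu2 (x, k) * `|p1 k x u - p2 k x u| * B + mu2 (x, k) * p2 k x u * D)
    <= B * `|mu1 (x, k) - mu2 (x, k)| + B * Lq * mu2 (x, k) + D * mu2 (x, k).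
  rewrite !big_split /= -!mulr_suml -!mulr_sumr p1_sum1 p2_sum1.
  have := ler_wpM2l (mulr_ge0 (mu2_ge0 (x, k)) B_ge0) (p12_le k x); lra.
apply: le_trans (_ : \sum_k \sum_x (B * `|mu1 (x, k) - mu2 (x, k)| + B * Lq * mu2 (x, k)
    + D * mu2 (x, k)) <= _); last first.
  have mu2_sum : \sum_k \sum_x mu2 (x, k) = 1 by rewrite -sum_pair.
  under eq_bigr do rewrite !big_split /= -!mulr_sumr.
  by rewrite !big_split /= -!mulr_sumr mu2_sum !mulr1.
apply: ler_sum => k _; apply: le_trans (_ : \sum_w \sum_x \sum_u
    `|mu1 (x, k) * p1 k x u * G1 k x u w - mu2 (x, k) * p2 k x u * G2 k x u w| <= _).
  apply: ler_sum => w _; apply: le_trans (ler_norm_sum _ _ _) _.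
  by apply: ler_sum => x _; apply: ler_norm_sum.
rewrite exchange_big /=; apply: ler_sum => x _; rewrite exchange_big /=.
by apply: le_trans (point_le k x); apply: ler_sum => u _; apply: mixture_term_le.
Qed.

End Mixture.

Section DiscountedSums.
Variable R : realType.

Lemma cvgn_discounted_series (g M : R) (v : nat -> R) : 0 <= g -> g < 1 ->
  (forall t, `|v t| <= M) -> cvgn (series (fun t => g ^+ t * v t) : R^nat).
Proof.
move=> g_ge0 g_lt1 v_le; have M_ge0 : 0 <= M := le_trans (normr_ge0 _) (v_le 0%N).
apply: normed_cvg; apply: (@series_le_cvg R _ (geometric M g)) => [n|n|n|].
- exact: normr_ge0.
- by rewrite /geometric /= mulr_ge0 // exprn_ge0.
- by rewrite /geometric /= normrM ger0_norm ?exprn_ge0 // mulrC ler_wpM2r ?exprn_ge0.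
- by apply: is_cvg_geometric_series; rewrite ger0_norm.
Qed.

Lemma cvgn_fsum (I : finType) (b : I -> nat -> R) : (forall i, cvgn (b i)) ->
  cvgn (fun n => \sum_i b i n) /\ limn (fun n => \sum_i b i n) = \sum_i limn (b i).
Proof.
move=> b_cvg; rewrite /index_enum; elim: (Finite.enum I) => [|i s [IHcvg IHlim]].
  under [fun n => _]funext do rewrite big_nil.
  by rewrite big_nil; split; [exact: is_cvg_cst | exact: lim_cst].
under [fun n => _]funext do rewrite big_cons.
rewrite big_cons; split; first exact: (is_cvgD (b_cvg i) IHcvg).
by rewrite (limD (b_cvg i) IHcvg) IHlim.
Qed.

Lemma limn_series_gap_le (K : nat) (a : nat -> R) (b : 'I_K -> nat -> R) (B : R) :
  cvgn (series a) -> (forall k, cvgn (series (b k))) ->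
  (forall n, `|series a n - \sum_k series (b k) n| <= B) ->
  `|limn (series a) - \sum_k limn (series (b k))| <= B.
Proof.
move=> a_cvg b_cvg gap_le; have [sum_cvg sum_lim] := cvgn_fsum b_cvg.
rewrite -sum_lim -(limB a_cvg sum_cvg) -lim_norm; last exact: is_cvgB a_cvg sum_cvg.
apply: limr_le; first exact: (is_cvg_norm (is_cvgB a_cvg sum_cvg)).
by apply: nearW => n; exact: gap_le.
Qed.

Lemma geometric_sumE (z : R) n : (1 - z) * \sum_(0 <= t < n) z ^+ t = 1 - z ^+ n.
Proof.
elim: n => [|n IH]; first by rewrite big_geq // mulr0 expr0 subrr.
by rewrite big_nat_recr //= mulrDr IH exprS; ring.
Qed.

(* The right-hand side is the sum of the whole series. *)
Lemma discounted_affine_geometric_le (g S A Kp : R) n :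
  0 <= g -> g * S < 1 -> 1 <= S -> 0 <= A -> 0 <= Kp ->
  \sum_(0 <= t < n) g ^+ t * (A + Kp * (S ^+ t - 1))
    <= A / (1 - g) + Kp * ((1 - g * S)^-1 - (1 - g)^-1).
Proof.
move=> g_ge0 gS_lt1 S_ge1 A_ge0 Kp_ge0.
have g_le_gS : g <= g * S by rewrite ler_peMr.
have [d1_gt0 d2_gt0] : 0 < 1 - g /\ 0 < 1 - g * S.
  by rewrite !subr_gt0; split => //; apply: le_lt_trans g_le_gS gS_lt1.
have sum_geomE (z : R) : 0 < 1 - z -> \sum_(0 <= t < n) z ^+ t = (1 - z ^+ n) * (1 - z)^-1.
  by move=> /lt0r_neq0 dz; rewrite -(geometric_sumE z n) mulrAC mulfV ?mul1r.
have -> : \sum_(0 <= t < n) g ^+ t * (A + Kp * (S ^+ t - 1)) =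
    A * \sum_(0 <= t < n) g ^+ t + Kp * \sum_(0 <= t < n) (g * S) ^+ t
    - Kp * \sum_(0 <= t < n) g ^+ t.
  rewrite !mulr_sumr -big_split -sumrB /=; apply: eq_bigr => t _; rewrite exprMn; ring.
rewrite !sum_geomE //; set u := (1 - g)^-1; set v := (1 - g * S)^-1.
have u_le_v : u <= v by rewrite lef_pV2 ?posrE // lerD2l lerN2.
have gn_le : g ^+ n <= (g * S) ^+ n by rewrite lerXn2r // nnegrE // (le_trans g_ge0 g_le_gS).
have u_ge0 : 0 <= u by rewrite invr_ge0 ltW.
have gnu_le : g ^+ n * u <= (g * S) ^+ n * v := ler_pM (exprn_ge0 n g_ge0) u_ge0 gn_le u_le_v.
have := mulr_ge0 A_ge0 (mulr_ge0 (exprn_ge0 n g_ge0) u_ge0).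
have : 0 <= Kp * ((g * S) ^+ n * v - g ^+ n * u) by rewrite mulr_ge0 ?subr_ge0.
lra.
Qed.

Lemma discounted_gap_le (K : nat) (g S A Kp M : R) (a : nat -> R) (b : 'I_K -> nat -> R) :
  0 <= g -> g * S < 1 -> 1 <= S -> 0 <= A -> 0 <= Kp ->
  (forall t, `|a t| <= M) -> (forall k t, `|b k t| <= M) ->
  (forall t, `|a t - \sum_k b k t| <= A + Kp * (S ^+ t - 1)) ->
  `|limn (series (fun t => g ^+ t * a t)) - \sum_k limn (series (fun t => g ^+ t * b k t))|
  <= A / (1 - g) + Kp * ((1 - g * S)^-1 - (1 - g)^-1).
Proof.
move=> g_ge0 gS_lt1 S_ge1 A_ge0 Kp_ge0 a_le b_le gap_le.
have g_lt1 : g < 1 by apply: le_lt_trans gS_lt1; rewrite ler_peMr.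
apply: limn_series_gap_le => [|k|n]; first exact: cvgn_discounted_series a_le.
  exact: cvgn_discounted_series (b_le k).
apply: le_trans (discounted_affine_geometric_le n g_ge0 gS_lt1 S_ge1 A_ge0 Kp_ge0).
rewrite /series /= exchange_big /= -sumrB; apply: le_trans (ler_norm_sum _ _ _) _.
apply: ler_sum => t _; rewrite -mulr_sumr -mulrBr normrM ger0_norm ?exprn_ge0 //.
by rewrite ler_wpM2l ?exprn_ge0.
Qed.

End DiscountedSums.

Section L1.
Variables (R : realType) (A : finType).
Implicit Types p q s : {ffun A -> R}.

Lemma l1_ge0 p q : 0 <= l1 p q.
Proof. by rewrite sumr_ge0. Qed.

Lemma l1_xx p : l1 p p = 0.
Proof. by rewrite /l1 big1 // => a _; rewrite subrr normr0. Qed.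

Lemma l1_triangle p q s : l1 p s <= l1 p q + l1 q s.
Proof.
rewrite /l1 -big_split /=; apply: ler_sum => a _.
by rewrite -(subrKA (q a)) ler_normD.
Qed.

End L1.

Lemma l1_pair (R : realType) (A B : finType) (p q : {ffun A * B -> R}) :
  l1 p q = \sum_b \sum_a `|p (a, b) - q (a, b)|.
Proof. exact: sum_pair. Qed.

Lemma delta_pmf (R : realType) (W : finType) (w : W) : is_pmf (fun z : W => (w == z)%:R : R).
Proof.
split => [z|]; first by rewrite ler0n.
by rewrite (bigD1 w) //= eqxx big1 ?addr0 // => z; rewrite eq_sym => /negPf ->.
Qed.

Lemma sum_delta (R : realType) (W : finType) (f : W -> R) w : \sum_u f u * (u == w)%:R = f w.
Proof. by rewrite (bigD1 w) //= eqxx mulr1 big1 ?addr0 // => u /negPf ->; rewrite mulr0. Qed.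

Lemma sum_unit (R : realType) (f : unit -> R) : \sum_w f w = f tt.
Proof. by rewrite (bigD1 tt) //= big1 ?addr0 // => -[]; rewrite eqxx. Qed.

Section MeanField.
Variables (R : realType) (X U : finType) (K : nat).
Variables (r : reward_t R X U K) (P : trans_t R X U K) (pi : policy_t R X U K).
Variables (M_R L_R L_P L_Q : R).
Hypothesis P_distr : forall k x u mu nu, is_distr mu -> is_distr nu -> is_distr (P k x u mu nu).
Hypothesis r_le : forall k x u mu nu, is_distr mu -> is_distr nu -> `|r k x u mu nu| <= M_R.
Hypothesis r_lip : forall k x u mu1 mu2 nu1 nu2, is_distr mu1 -> is_distr mu2 ->
  is_distr nu1 -> is_distr nu2 ->
  `|r k x u mu1 nu1 - r k x u mu2 nu2| <= L_R * (l1 mu1 mu2 + l1 nu1 nu2).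
Hypothesis P_lip : forall k x u mu1 mu2 nu1 nu2, is_distr mu1 -> is_distr mu2 ->
  is_distr nu1 -> is_distr nu2 ->
  l1 (P k x u mu1 nu1) (P k x u mu2 nu2) <= L_P * (l1 mu1 mu2 + l1 nu1 nu2).
Hypothesis pi_distr : forall t k x mu, is_distr mu -> is_distr (pi t k x mu).
Hypothesis pi_lip : forall t k x mu1 mu2, is_distr mu1 -> is_distr mu2 ->
  l1 (pi t k x mu1) (pi t k x mu2) <= L_Q * l1 mu1 mu2.
Hypotheses (M_R_ge0 : 0 <= M_R) (L_R_ge0 : 0 <= L_R) (L_P_ge0 : 0 <= L_P) (L_Q_ge0 : 0 <= L_Q).

Lemma nuMF_distr t mu : is_distr mu -> is_distr (nuMF mu (pi t)).
Proof.
move=> mu_distr; have [mu_ge0 mu_sum1] := mu_distr; split => [p|].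
  by rewrite ffunE sumr_ge0 // => x _; rewrite mulr_ge0 //; case: (pi_distr t p.2 x mu_distr).
rewrite sum_pair -mu_sum1 sum_pair; apply: eq_bigr => k _.
under eq_bigr do rewrite ffunE /=.
rewrite exchange_big /=; apply: eq_bigr => x _.
by rewrite -mulr_suml; case: (pi_distr t k x mu_distr) => _ ->; rewrite mul1r.
Qed.

Lemma PMF_distr t mu : is_distr mu -> is_distr (PMF P mu (pi t)).
Proof.
move=> mu_distr; have [mu_ge0 mu_sum1] := mu_distr.
have nu_distr := nuMF_distr t mu_distr; split => [p|].
  rewrite ffunE sumr_ge0 // => x _; rewrite sumr_ge0 // => u _.
  have [pi_ge0 _] := pi_distr t p.2 x mu_distr.
  by have [P_ge0 _] := P_distr p.2 x u mu_distr nu_distr; rewrite !mulr_ge0.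
rewrite sum_pair -mu_sum1 sum_pair; apply: eq_bigr => k _.
under eq_bigr do rewrite ffunE /=.
rewrite exchange_big /=; apply: eq_bigr => x _; rewrite exchange_big /=.
under eq_bigr do rewrite -mulr_sumr (proj2 (P_distr k x _ mu_distr nu_distr)) mulr1.
by rewrite -mulr_sumr; case: (pi_distr t k x mu_distr) => _ ->; rewrite mulr1.
Qed.

Lemma mu_traj_distr mu0 t : is_distr mu0 -> is_distr (mu_traj P pi mu0 t).
Proof. by move=> mu0_distr; elim: t => [|t IH] //=; exact: PMF_distr. Qed.

Lemma rMF_le t k mu : is_distr mu -> `|rMF r k mu (pi t)| <= M_R.
Proof.
move=> mu_distr; have [mu_ge0 mu_sum1] := mu_distr; have nu_distr := nuMF_distr t mu_distr.
have mu_k_le1 : \sum_x mu (x, k) <= 1.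
  rewrite -mu_sum1 sum_pair (bigD1 k) //= lerDl.
  by apply: sumr_ge0 => i _; apply: sumr_ge0.
apply: le_trans (ler_norm_sum _ _ _) _.
apply: le_trans (_ : \sum_x mu (x, k) * M_R <= _); last by rewrite -mulr_suml ler_piMl.
apply: ler_sum => x _; have [pi_ge0 pi_sum1] := pi_distr t k x mu_distr.
apply: le_trans (ler_norm_sum _ _ _) _.
apply: le_trans (_ : \sum_u mu (x, k) * pi t k x mu u * M_R <= _).
  apply: ler_sum => u _; rewrite normrM ger0_norm ?mulr_ge0 //.
  by rewrite ler_wpM2l ?mulr_ge0 ?r_le.
by rewrite -mulr_suml -mulr_sumr pi_sum1 mulr1.
Qed.

Lemma policy_mixture_le t mu1 mu2 (W : finType) (G1 G2 : 'I_K -> X -> U -> W -> R) B D :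
  is_distr mu1 -> is_distr mu2 -> 0 <= B ->
  (forall k x u, \sum_w `|G1 k x u w| <= B) ->
  (forall k x u, \sum_w `|G1 k x u w - G2 k x u w| <= D) ->
  \sum_k \sum_w `|\sum_x \sum_u (mu1 (x, k) * pi t k x mu1 u * G1 k x u w
                                - mu2 (x, k) * pi t k x mu2 u * G2 k x u w)|
  <= B * (1 + L_Q) * l1 mu1 mu2 + D.
Proof.
move=> mu1_distr mu2_distr B_ge0 G1_le G12_le; have [mu2_ge0 mu2_sum1] := mu2_distr.
apply: le_trans (@mixture_l1_le R X U W K mu1 mu2 (fun k x u => pi t k x mu1 u)
  (fun k x u => pi t k x mu2 u) G1 G2 B D (L_Q * l1 mu1 mu2) mu2_ge0 mu2_sum1
  (fun k x => proj1 (pi_distr t k x mu1_distr)) (fun k x => proj2 (pi_distr t k x mu1_distr))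
  (fun k x => proj1 (pi_distr t k x mu2_distr)) (fun k x => proj2 (pi_distr t k x mu2_distr))
  G1_le G12_le (fun k x => pi_lip t k x mu1_distr mu2_distr) B_ge0) _.
rewrite -l1_pair; lra.
Qed.

Lemma nuMF_lip t mu1 mu2 : is_distr mu1 -> is_distr mu2 ->
  l1 (nuMF mu1 (pi t)) (nuMF mu2 (pi t)) <= (1 + L_Q) * l1 mu1 mu2.
Proof.
move=> mu1_distr mu2_distr.
pose G (k : 'I_K) (x : X) (u w : U) : R := (u == w)%:R.
have G_le k x u : \sum_w `|G k x u w| <= 1.
  by under eq_bigr do rewrite normr_nat; rewrite (proj2 (delta_pmf R u)).
have G12_le k x u : \sum_w `|G k x u w - G k x u w| <= 0.
  by rewrite big1 // => w _; rewrite subrr normr0.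
have := policy_mixture_le t mu1_distr mu2_distr ler01 G_le G12_le.
rewrite mul1r addr0; congr (_ <= _); rewrite l1_pair.
apply: eq_bigr => k _; apply: eq_bigr => w _; rewrite !ffunE /= -sumrB.
congr `|_|; apply: eq_bigr => x _; rewrite sumrB !sum_delta.
by congr (_ - _); exact: mulrC.
Qed.

Lemma l1_mixtureE (W : finType) (F1 F2 : 'I_K -> X -> U -> W -> R)
    (m1 m2 : {ffun W * 'I_K -> R}) :
  (forall w k, m1 (w, k) = \sum_x \sum_u F1 k x u w) ->
  (forall w k, m2 (w, k) = \sum_x \sum_u F2 k x u w) ->
  l1 m1 m2 = \sum_k \sum_w `|\sum_x \sum_u (F1 k x u w - F2 k x u w)|.
Proof.
move=> m1E m2E; rewrite l1_pair; apply: eq_bigr => k _; apply: eq_bigr => w _.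
by rewrite m1E m2E -sumrB; congr `|_|; apply: eq_bigr => x _; rewrite sumrB.
Qed.

Lemma PMF_lip t mu1 mu2 : is_distr mu1 -> is_distr mu2 ->
  l1 (PMF P mu1 (pi t)) (PMF P mu2 (pi t)) <= ((1 + L_Q) + L_P * (2 + L_Q)) * l1 mu1 mu2.
Proof.
move=> mu1_distr mu2_distr.
have nu1_distr := nuMF_distr t mu1_distr; have nu2_distr := nuMF_distr t mu2_distr.
have P_le k x u : \sum_w `|P k x u mu1 (nuMF mu1 (pi t)) w| <= 1.
  have [P_ge0 P_sum1] := P_distr k x u mu1_distr nu1_distr.
  by rewrite -P_sum1; apply: ler_sum => w _; rewrite ger0_norm.
rewrite (l1_mixtureE (fun w k => ffunE _ _) (fun w k => ffunE _ _)).
apply: le_trans (policy_mixture_le t mu1_distr mu2_distr ler01 P_le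
  (fun k x u => P_lip k x u mu1_distr mu2_distr nu1_distr nu2_distr)) _.
have := ler_wpM2l L_P_ge0 (nuMF_lip t mu1_distr mu2_distr); have := l1_ge0 mu1 mu2; nra.
Qed.

Lemma rMF_lip t mu1 mu2 : is_distr mu1 -> is_distr mu2 ->
  \sum_k `|rMF r k mu1 (pi t) - rMF r k mu2 (pi t)|
    <= (M_R * (1 + L_Q) + L_R * (2 + L_Q)) * l1 mu1 mu2.
Proof.
move=> mu1_distr mu2_distr.
have nu1_distr := nuMF_distr t mu1_distr; have nu2_distr := nuMF_distr t mu2_distr.
have r_le' k x u : \sum_(w : unit) `|r k x u mu1 (nuMF mu1 (pi t))| <= M_R.
  by rewrite sum_unit r_le.
have r_lip' k x u : \sum_(w : unit) `|r k x u mu1 (nuMF mu1 (pi t)) - r k x u mu2 (nuMF mu2 (pi t))|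
    <= L_R * (l1 mu1 mu2 + l1 (nuMF mu1 (pi t)) (nuMF mu2 (pi t))).
  by rewrite sum_unit r_lip.
have rMF_diffE k : `|rMF r k mu1 (pi t) - rMF r k mu2 (pi t)| = \sum_(w : unit)
    `|\sum_x \sum_u (mu1 (x, k) * pi t k x mu1 u * r k x u mu1 (nuMF mu1 (pi t))
                     - mu2 (x, k) * pi t k x mu2 u * r k x u mu2 (nuMF mu2 (pi t)))|.
  by rewrite sum_unit -sumrB; congr `|_|; apply: eq_bigr => x _; rewrite sumrB.
under eq_bigr do rewrite rMF_diffE.
apply: le_trans (policy_mixture_le t mu1_distr mu2_distr M_R_ge0 r_le' r_lip') _.
have := ler_wpM2l L_R_ge0 (nuMF_lip t mu1_distr mu2_distr); have := l1_ge0 mu1 mu2; nra.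
Qed.


Section NAgent.
Variable N : 'I_K -> nat.
Hypothesis Npop_gt0 : (0 < Npop N)%N.
Local Notation agent := (agent N).
Local Notation Np := ((Npop N)%:R : R).
Local Notation eps := (conc_rate R N).
Local Notation S_P := ((1 + L_Q) + L_P * (2 + L_Q)).
Local Notation S_R := (M_R * (1 + L_Q) + L_R * (2 + L_Q)).
Local Notation c_step := (2 * (Num.sqrt #|X|%:R * eps) + L_P * (Num.sqrt #|U|%:R * eps)).

Lemma agent_avg_le (F : agent -> R) B : (forall a, `|F a| <= B) -> `|(\sum_a F a) / Np| <= B.
Proof.
move=> F_le; have Np_gt0 : 0 < Np by rewrite ltr0n.
rewrite normrM (ger0_norm (x := Np^-1)) ?invr_ge0 // ler_pdivrMr // -card_agent mulr_sumr.
by apply: le_trans (ler_norm_sum _ _ _) _; apply: ler_sum => a _; rewrite mulr1.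
Qed.

Section FixedState.
Variables (t : nat) (xs : {ffun agent -> X}).
Let mu := emp_mu R xs.
Let mu_distr : is_distr mu := empirical_distr R xs Npop_gt0.
Let q (a : agent) : U -> R := pi t (tag a) (xs a) mu.
Let q_pmf a : is_pmf (q a) := pi_distr t (tag a) (xs a) mu_distr.
Let nu := nuMF mu (pi t).
Let nu_distr : is_distr nu := nuMF_distr t mu_distr.

Lemma act_prob_ge0 us : 0 <= act_prob pi t xs us.
Proof. exact: prod_pmf_ge0 q_pmf us. Qed.

Lemma act_prob_sum1 : \sum_us act_prob pi t xs us = 1.
Proof. exact: prod_pmf_sum1 q_pmf. Qed.

Lemma act_conc : \sum_us act_prob pi t xs us * l1 (emp_nu R us) nu <= Num.sqrt #|U|%:R * eps.
Proof.
apply: (empirical_kernel_conc q_pmf (fun a u => delta_pmf R u)) => [us w k|w k].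
  by rewrite ffunE.
rewrite ffunE /=; under eq_bigr do rewrite mulrC.
rewrite empirical_sum; congr (_ / _); apply: eq_bigr => a /eqP <-.
by rewrite sum_delta.
Qed.

Definition next_mean (us : {ffun agent -> U}) : {ffun X * 'I_K -> R} :=
  [ffun p : X * 'I_K =>
     (\sum_(a : agent | tag a == p.2) P (tag a) (xs a) (us a) mu (emp_nu R us) p.1) / Np].

Definition next_mean_mf (us : {ffun agent -> U}) : {ffun X * 'I_K -> R} :=
  [ffun p : X * 'I_K => (\sum_(a : agent | tag a == p.2) P (tag a) (xs a) (us a) mu nu p.1) / Np].

Lemma next_mean_mf_conc :
  \sum_us act_prob pi t xs us * l1 (next_mean_mf us) (PMF P mu (pi t))
  <= Num.sqrt #|X|%:R * eps.
Proof.
apply: (empirical_kernel_conc q_pmf (fun a u => P_distr (tag a) (xs a) u mu_distr nu_distr))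
  => [us x' k|x' k]; first by rewrite ffunE.
rewrite ffunE /=; under eq_bigr do under eq_bigr do rewrite -mulrA.
under eq_bigr do rewrite -mulr_sumr.
by rewrite empirical_sum; congr (_ / _); apply: eq_bigr => a /eqP <-.
Qed.

Lemma next_mean_l1_le us : l1 (next_mean us) (next_mean_mf us) <= L_P * l1 (emp_nu R us) nu.
Proof.
have emp_nu_distr : is_distr (emp_nu R us) := empirical_distr R us Npop_gt0.
pose F a := l1 (P (tag a) (xs a) (us a) mu (emp_nu R us)) (P (tag a) (xs a) (us a) mu nu).
apply: le_trans (_ : (\sum_a F a) / Np <= _).
  rewrite l1_pair sum_by_class mulr_suml; apply: ler_sum => k _.
  rewrite /F /l1 exchange_big /= mulr_suml; apply: ler_sum => x _.
  rewrite !ffunE /= -mulrBl -sumrB normrM (ger0_norm (x := Np^-1)) ?invr_ge0 //.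
  by rewrite ler_wpM2r ?invr_ge0 ?ler_norm_sum.
apply: le_trans (ler_norm _) (agent_avg_le _) => a.
rewrite ger0_norm ?l1_ge0 //.
by have := P_lip (tag a) (xs a) (us a) mu_distr mu_distr emp_nu_distr nu_distr; rewrite l1_xx add0r.
Qed.

Lemma step_prob_pmf us : is_pmf (step_prob P xs us).
Proof.
have emp_nu_distr : is_distr (emp_nu R us) := empirical_distr R us Npop_gt0.
have q_step_pmf a := P_distr (tag a) (xs a) (us a) mu_distr emp_nu_distr.
by split; [exact: prod_pmf_ge0 q_step_pmf | exact: prod_pmf_sum1 q_step_pmf].
Qed.

Lemma step_conc us :
  \sum_xs' step_prob P xs us xs' * l1 (emp_mu R xs') (next_mean us) <= Num.sqrt #|X|%:R * eps.
Proof.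
have emp_nu_distr : is_distr (emp_nu R us) := empirical_distr R us Npop_gt0.
apply: (empirical_kernel_conc (fun a => P_distr (tag a) (xs a) (us a) mu_distr emp_nu_distr)
  (fun a x => delta_pmf R x)) => [xs' x k|x k]; first by rewrite ffunE.
by rewrite ffunE; congr (_ / _); apply: eq_bigr => a _; rewrite sum_delta.
Qed.

Lemma step_l1_le us mut : is_distr mut ->
  \sum_xs' step_prob P xs us xs' * l1 (emp_mu R xs') (PMF P mut (pi t))
  <= Num.sqrt #|X|%:R * eps + L_P * l1 (emp_nu R us) nu
     + l1 (next_mean_mf us) (PMF P mu (pi t)) + S_P * l1 mu mut.
Proof.
move=> mut_distr; have [step_ge0 step_sum1] := step_prob_pmf us.
set C := l1 (next_mean us) (next_mean_mf us) + l1 (next_mean_mf us) (PMF P mu (pi t))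
  + l1 (PMF P mu (pi t)) (PMF P mut (pi t)).
apply: le_trans (_ : \sum_xs' step_prob P xs us xs' * (l1 (emp_mu R xs') (next_mean us) + C) <= _).
  apply: ler_sum => xs' _; rewrite ler_wpM2l //.
  apply: le_trans (l1_triangle _ (next_mean us) _) _; rewrite lerD2l /C -addrA.
  by apply: le_trans (l1_triangle _ (next_mean_mf us) _) _; rewrite lerD2l l1_triangle.
under eq_bigr do rewrite mulrDr; rewrite big_split /= -mulr_suml step_sum1 mul1r.
have := step_conc us; have := next_mean_l1_le us; have := PMF_lip t mu_distr mut_distr.
rewrite /C; lra.
Qed.

Lemma one_step_l1_le mut : is_distr mut ->
  \sum_us act_prob pi t xs us *
    \sum_xs' step_prob P xs us xs' * l1 (emp_mu R xs') (PMF P mut (pi t))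
  <= c_step + S_P * l1 mu mut.
Proof.
move=> mut_distr.
apply: le_trans (_ : \sum_us act_prob pi t xs us * (Num.sqrt #|X|%:R * eps
    + L_P * l1 (emp_nu R us) nu + l1 (next_mean_mf us) (PMF P mu (pi t)) + S_P * l1 mu mut) <= _).
  by apply: ler_sum => us _; rewrite ler_wpM2l ?act_prob_ge0 ?step_l1_le.
have act_avg c := pmf_sum_const c (conj act_prob_ge0 act_prob_sum1).
under eq_bigr do rewrite !mulrDr.
have act_L_P : \sum_us act_prob pi t xs us * (L_P * l1 (emp_nu R us) nu)
    = L_P * \sum_us act_prob pi t xs us * l1 (emp_nu R us) nu.
  by rewrite mulr_sumr; apply: eq_bigr => us _; rewrite mulrCA.
rewrite !big_split /= !act_avg act_L_P.
have := ler_wpM2l L_P_ge0 act_conc; have := next_mean_mf_conc; lra.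
Qed.

Lemma reward_mf_actionsE :
  \sum_us act_prob pi t xs us * ((\sum_a r (tag a) (xs a) (us a) mu nu) / Np)
  = \sum_k rMF r k mu (pi t).
Proof.
under eq_bigr do rewrite mulrA mulr_sumr.
rewrite -mulr_suml exchange_big /=.
under eq_bigr => a _ do rewrite (prod_pmf_marginal q_pmf a (fun u => r (tag a) (xs a) u mu nu)).
rewrite sum_by_class mulr_suml; apply: eq_bigr => k _.
rewrite /rMF; under [RHS]eq_bigr do under eq_bigr do rewrite -mulrA.
under [RHS]eq_bigr do rewrite -mulr_sumr.
by rewrite empirical_sum; congr (_ / _); apply: eq_bigr => a /eqP <-.
Qed.

Lemma reward_emp_actions_le :
  `|\sum_us act_prob pi t xs us * ((\sum_a r (tag a) (xs a) (us a) mu (emp_nu R us)) / Np)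
    - \sum_us act_prob pi t xs us * ((\sum_a r (tag a) (xs a) (us a) mu nu) / Np)|
  <= L_R * (Num.sqrt #|U|%:R * eps).
Proof.
rewrite -sumrB; apply: le_trans (ler_norm_sum _ _ _) _.
apply: le_trans (_ : \sum_us act_prob pi t xs us * (L_R * l1 (emp_nu R us) nu) <= _); last first.
  by under eq_bigr do rewrite mulrCA; rewrite -mulr_sumr ler_wpM2l // act_conc.
apply: ler_sum => us _; rewrite -mulrBr -mulrBl -sumrB normrM ger0_norm ?act_prob_ge0 //.
rewrite ler_wpM2l ?act_prob_ge0 //; apply: agent_avg_le => a.
have emp_nu_distr : is_distr (emp_nu R us) := empirical_distr R us Npop_gt0.
by have := r_lip (tag a) (xs a) (us a) mu_distr mu_distr emp_nu_distr nu_distr; rewrite l1_xx add0r.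
Qed.

Lemma reward_one_step_le mut : is_distr mut ->
  `|\sum_us act_prob pi t xs us *
      ((\sum_a r (tag a) (xs a) (us a) (emp_mu R xs) (emp_nu R us)) / Np)
    - \sum_k rMF r k mut (pi t)|
  <= L_R * (Num.sqrt #|U|%:R * eps) + S_R * l1 mu mut.
Proof.
move=> mut_distr; apply: le_trans (ler_distD (\sum_k rMF r k mu (pi t)) _ _) _.
rewrite -{1}reward_mf_actionsE; apply: lerD; first exact: reward_emp_actions_le.
rewrite -sumrB; apply: le_trans (ler_norm_sum _ _ _) _; exact: rMF_lip.
Qed.

End FixedState.
Variable x0 : {ffun agent -> X}.
Local Notation law := (state_law P pi x0).
Local Notation mu_t := (mu_traj P pi (emp_mu R x0)).

Lemma mu_t_distr t : is_distr (mu_t t).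
Proof. exact/mu_traj_distr/empirical_distr. Qed.

Lemma state_law_pmf t : is_pmf (law t).
Proof.
elim: t => [|t [law_ge0 law_sum1]].
  split => [xs|]; first by rewrite ffunE ler0n.
  under eq_bigr do rewrite ffunE.
  by rewrite (bigD1 x0) //= eqxx big1 ?addr0 // => xs /negPf ->.
split => [xs'|].
  rewrite ffunE; apply: sumr_ge0 => xs _; apply: sumr_ge0 => us _.
  by rewrite !mulr_ge0 ?act_prob_ge0 //; case: (step_prob_pmf xs us).
under eq_bigr do rewrite ffunE.
rewrite exchange_big /= -[RHS]law_sum1; apply: eq_bigr => xs _; rewrite exchange_big /=.
under eq_bigr => us _ do rewrite -mulr_sumr (proj2 (step_prob_pmf xs us)) mulr1.
by rewrite -mulr_sumr act_prob_sum1 mulr1.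
Qed.

Definition mf_dev t : R := \sum_xs law t xs * l1 (emp_mu R xs) (mu_t t).

Lemma mf_dev0 : mf_dev 0 = 0.
Proof.
rewrite /mf_dev /= (bigD1 x0) //= ffunE eqxx mul1r l1_xx add0r big1 // => xs /negPf xs_x0.
by rewrite ffunE xs_x0 mul0r.
Qed.

Lemma mf_dev_rec t : mf_dev t.+1 <= c_step + S_P * mf_dev t.
Proof.
have law_pmf := state_law_pmf t; have [law_ge0 _] := law_pmf.
have -> : mf_dev t.+1 = \sum_xs law t xs * (\sum_us act_prob pi t xs us *
    \sum_xs' step_prob P xs us xs' * l1 (emp_mu R xs') (PMF P (mu_t t) (pi t))).
  rewrite /mf_dev /=; under eq_bigr do rewrite ffunE mulr_suml.
  rewrite exchange_big /=; apply: eq_bigr => xs _.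
  under eq_bigr do rewrite mulr_suml.
  rewrite exchange_big /= mulr_sumr; apply: eq_bigr => us _.
  by rewrite !mulr_sumr; apply: eq_bigr => xs' _; rewrite !mulrA.
rewrite /mf_dev -pmf_sum_affine //; apply: ler_sum => xs _.
by apply: ler_wpM2l => //; exact/one_step_l1_le/mu_t_distr.
Qed.

Lemma mf_dev_le t : 1 < S_P -> mf_dev t <= c_step * (S_P ^+ t - 1) / (S_P - 1).
Proof.
move=> S_P_gt1; have S_P_neq1 : S_P - 1 != 0 by rewrite subr_eq0 gt_eqF.
elim: t => [|t IH]; first by rewrite mf_dev0 expr0 subrr mulr0 mul0r.
apply: le_trans (mf_dev_rec t) _.
apply: le_trans (_ : c_step + S_P * (c_step * (S_P ^+ t - 1) / (S_P - 1)) <= _).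
  by rewrite lerD2l ler_wpM2l // (le_trans ler01 (ltW S_P_gt1)).
by rewrite exprS le_eqVlt; apply/orP; left; apply/eqP; field.
Qed.

Lemma exp_rewardE t :
  exp_reward r P pi x0 t = \sum_xs law t xs * (\sum_us act_prob pi t xs us *
    ((\sum_a r (tag a) (xs a) (us a) (emp_mu R xs) (emp_nu R us)) / Np)).
Proof.
by apply: eq_bigr => xs _; rewrite mulr_sumr; apply: eq_bigr => us _; rewrite [RHS]mulrA.
Qed.

Lemma exp_reward_gap_le t :
  `|exp_reward r P pi x0 t - \sum_k rMF r k (mu_t t) (pi t)|
  <= L_R * (Num.sqrt #|U|%:R * eps) + S_R * mf_dev t.
Proof.
have law_pmf := state_law_pmf t; have [law_ge0 _] := law_pmf.
rewrite exp_rewardE -[X in _ - X](pmf_sum_const _ law_pmf) -sumrB.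
rewrite /mf_dev -pmf_sum_affine //; apply: le_trans (ler_norm_sum _ _ _) _.
apply: ler_sum => xs _; rewrite -mulrBr normrM ger0_norm // ler_wpM2l //.
exact/reward_one_step_le/mu_t_distr.
Qed.

Lemma exp_reward_le t : `|exp_reward r P pi x0 t| <= M_R.
Proof.
rewrite exp_rewardE; apply: pmf_mean_norm_le (state_law_pmf t) _ => xs.
apply: pmf_mean_norm_le (conj (act_prob_ge0 t xs) (act_prob_sum1 t xs)) _ => us.
by apply: agent_avg_le => a; apply: r_le; exact: empirical_distr.
Qed.

Lemma vN_vMF_gap_le gamma : 0 <= gamma -> gamma * S_P < 1 -> 1 < S_P ->
  `|vN r P pi gamma x0 - vMF r P pi gamma (emp_mu R x0)|
  <= L_R * (Num.sqrt #|U|%:R * eps) / (1 - gamma)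
     + S_R / (S_P - 1) * c_step * ((1 - gamma * S_P)^-1 - (1 - gamma)^-1).
Proof.
move=> g_ge0 gS_lt1 S_P_gt1.
have S_R_ge0 : 0 <= S_R by rewrite addr_ge0 ?mulr_ge0 ?addr_ge0.
have eps_ge0 : 0 <= eps := conc_rate_ge0 R N.
apply: discounted_gap_le exp_reward_le (fun k t => rMF_le t k (mu_t_distr t)) _ => //.
- exact: ltW.
- by rewrite mulr_ge0 // mulr_ge0 // sqrtr_ge0.
- have sqrt_eps_ge0 (n : nat) : 0 <= Num.sqrt n%:R * eps by rewrite mulr_ge0 ?sqrtr_ge0.
  apply: mulr_ge0; first by rewrite divr_ge0 // subr_ge0 ltW.
  by rewrite addr_ge0 // mulr_ge0 ?ler0n.
move=> t; apply: le_trans (exp_reward_gap_le t) _; rewrite lerD2l.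
by apply: le_trans (ler_wpM2l S_R_ge0 (mf_dev_le t S_P_gt1)) _; lra.
Qed.

End NAgent.
End MeanField.

Lemma rate_constants_le (R : realType) (sX sU eps M_R L_R L_P w g d : R) :
  1 <= sX -> 1 <= sU -> 0 <= eps -> 0 <= M_R -> 0 <= L_P -> 0 <= w -> 0 <= d -> g < 1 ->
  L_R * (sU * eps) / (1 - g) + w * (2 * (sX * eps) + L_P * (sU * eps)) * d
  <= (M_R + L_R) / (1 - g) * sU * eps + (2 + L_P) * w * (sX * sU) * eps * d.
Proof.
move=> sX_ge1 sU_ge1 eps_ge0 M_R_ge0 L_P_ge0 w_ge0 d_ge0 g_lt1.
have sX_eps_ge0 : 0 <= sX * eps by rewrite mulr_ge0 // (le_trans ler01).
have sU_eps_ge0 : 0 <= sU * eps by rewrite mulr_ge0 // (le_trans ler01).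
have : 0 <= M_R * (sU * eps) / (1 - g).
  by apply: mulr_ge0; [exact: mulr_ge0 | rewrite invr_ge0 subr_ge0 ltW].
have : 0 <= w * d * (2 * (sX * eps) * (sU - 1) + L_P * (sU * eps) * (sX - 1)).
  apply: mulr_ge0; first exact: mulr_ge0.
  by apply: addr_ge0; apply: mulr_ge0; rewrite ?subr_ge0 // mulr_ge0 ?ler0n.
lra.
Qed.


Theorem theorem1 (R : realType) (X U : finType) (K : nat) (N : 'I_K -> nat)
  (r : reward_t R X U K) (P : trans_t R X U K) (pi : policy_t R X U K)
  (M_R L_R L_P L_Q gamma : R)
  (x0 : {ffun agent N -> X}) :
  (0 < K)%N ->
  (forall k, 0 < N k)%N ->
  0 < M_R -> 0 < L_R -> 0 < L_P -> 0 < L_Q ->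
  0 <= gamma -> gamma < 1 ->
  (* model assumptions *)
  (forall k x u mu nu, is_distr mu -> is_distr nu -> is_distr (P k x u mu nu)) ->
  (forall k x u mu nu, is_distr mu -> is_distr nu -> `|r k x u mu nu| <= M_R) ->
  (forall k x u mu1 mu2 nu1 nu2, is_distr mu1 -> is_distr mu2 ->
     is_distr nu1 -> is_distr nu2 ->
     `|r k x u mu1 nu1 - r k x u mu2 nu2| <= L_R * (l1 mu1 mu2 + l1 nu1 nu2)) ->
  (forall k x u mu1 mu2 nu1 nu2, is_distr mu1 -> is_distr mu2 ->
     is_distr nu1 -> is_distr nu2 ->
     l1 (P k x u mu1 nu1) (P k x u mu2 nu2) <= L_P * (l1 mu1 mu2 + l1 nu1 nu2)) ->
  (* pi is a policy in Pi *)
  (forall t k x mu, is_distr mu -> is_distr (pi t k x mu)) ->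
  (forall t k x mu1 mu2, is_distr mu1 -> is_distr mu2 ->
     l1 (pi t k x mu1) (pi t k x mu2) <= L_Q * l1 mu1 mu2) ->
  let S_R := M_R * (1 + L_Q) + L_R * (2 + L_Q) in
  let S_P := (1 + L_Q) + L_P * (2 + L_Q) in
  let C_R := M_R + L_R in
  let C_P := 2 + L_P in
  let mu0 := @emp_mu R X K N x0 in
  let sumsq := \sum_(k < K) Num.sqrt ((N k)%:R : R) in
  gamma * S_P < 1 ->
  `|vN r P pi gamma x0 - vMF r P pi gamma mu0| <=
    C_R / (1 - gamma) * Num.sqrt (#|U|%:R) * ((Npop N)%:R^-1 * sumsq)
    + C_P * (S_R / (S_P - 1)) * Num.sqrt ((#|X| * #|U|)%:R)
        * ((Npop N)%:R^-1 * sumsq)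
        * ((1 - gamma * S_P)^-1 - (1 - gamma)^-1).
Proof.
move=> K_gt0 N_gt0 M_R_gt0 L_R_gt0 L_P_gt0 L_Q_gt0 g_ge0 g_lt1 P_distr r_le r_lip P_lip
  pi_distr pi_lip S_R S_P C_R C_P mu0 sumsq gS_P_lt1.
pose k0 : 'I_K := Ordinal K_gt0; pose a0 : agent N := Tagged _ (Ordinal (N_gt0 k0)).
have Npop_gt0 : (0 < Npop N)%N by rewrite /Npop (bigD1 k0) //= addn_gt0 N_gt0.
have X_gt0 : (0 < #|X|)%N by apply/card_gt0P; exists (x0 a0).
have U_gt0 : (0 < #|U|)%N.
  exact: pmf_card_gt0 (pi_distr 0%N k0 (x0 a0) _ (empirical_distr R x0 Npop_gt0)).
have sqrt_ge1 n : (0 < n)%N -> 1 <= Num.sqrt (n%:R : R).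
  by move=> n_gt0; rewrite -[leLHS]sqrtr1 ler_sqrt ?ler1n.
have S_P_gt1 : 1 < S_P by rewrite /S_P; have := mulr_gt0 L_P_gt0 L_Q_gt0; lra.
apply: le_trans (vN_vMF_gap_le P_distr r_le r_lip P_lip pi_distr pi_lip (ltW M_R_gt0)
  (ltW L_R_gt0) (ltW L_P_gt0) (ltW L_Q_gt0) Npop_gt0 x0 g_ge0 gS_P_lt1 S_P_gt1) _.
rewrite natrM sqrtrM ?ler0n //; apply: rate_constants_le => //.
- exact: sqrt_ge1.
- exact: sqrt_ge1.
- exact: conc_rate_ge0.
- exact: ltW.
- exact: ltW.
- by rewrite divr_ge0 ?subr_ge0 ?(ltW S_P_gt1) //; nra.
- by rewrite subr_ge0 lef_pV2 ?posrE ?subr_gt0 // lerD2l lerN2 ler_peMr // ltW.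
Qed.
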